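(* Let $(\Omega,\mathcal F)$ be a measurable space and $\mathcal P$ a σ-convex family of probability measures on $\mathcal F$. The following are equivalent: (1) $\mathcal P$ is dominated by a σ-finite measure; (2) there is a countable set $\mathcal Q$ of pairwise singular probability measures on $\mathcal F$ such that $\mathcal Q\lll\mathcal P\lll\mathrm{sconv}(\mathcal Q)$.
   Context: σ-convex: closed under countable convex combinations $\sum_k\lambda_kP_k$ ($\lambda_k\ge0$, $\sum\lambda_k=1$). $\mathrm{sconv}(\mathcal Q)$ is the set of all countable convex combinations of elements of $\mathcal Q$. For families $\mathcal A,\mathcal B$ of measures, $\mathcal A\lll\mathcal B$ means that for every $A\in\mathcal A$ there is $B\in\mathcal B$ with $A\ll B$. $\mathcal P$ is dominated by a measure $\mu$ if $P\ll\mu$ for all $P\in\mathcal P$. *)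

From HB Require Import structures.
From mathcomp Require Import all_boot all_order all_algebra.
From mathcomp Require Import all_classical all_reals all_analysis.
Set Implicit Arguments. Unset Strict Implicit. Unset Printing Implicit Defensive.
Import Order.TTheory GRing.Theory Num.Theory numFieldNormedType.Exports.
Local Open Scope classical_set_scope.
Local Open Scope ring_scope.

Section defs.
Context d (T : measurableType d) (R : realType).

(* P is a countable convex combination of elements of Q:
   P = sum_k lam_k P_k with lam_k >= 0, sum lam_k = 1, P_k in Q
   (finite combinations are included by taking lam_k = 0 for large k). *)
Definition sconv (Q : set (probability T R)) : set (probability T R) :=
  [set P | exists (lam : nat -> R) (Pk : nat -> probability T R),
     [/\ (forall k, 0 <= lam k),
         (series lam) @ \oo --> (1 : R),
         (forall k, Q (Pk k)) &
         (forall A, measurable A ->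
            P A = (\sum_(0 <= k <oo) ((lam k)%:E * Pk k A))%E)]].

Definition sigma_convex (F : set (probability T R)) : Prop := sconv F `<=` F.

Definition lll (A B : set (probability T R)) : Prop :=
  forall P, A P -> exists2 Q, B Q & (P : set T -> \bar R) `<< Q.

Definition fam_dominated_by (F : set (probability T R)) (mu : set T -> \bar R) :=
  forall P, F P -> (P : set T -> \bar R) `<< mu.

Definition msingular (P Q : set T -> \bar R) : Prop :=
  exists A, [/\ measurable A, P A = 0%E & Q (~` A) = 0%E].

End defs.

(* Halmos-Savage argument.  Let F be dominated by the sigma-finite mu.  On a set
   E of finite mu-measure, take a set Bs of maximal mu-measure on which mu is
   dominated by a single Ps in F (maximal sets exist because such sets are closed
   under countable unions, by sigma-convexity).  Every P in F is then dominated by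
   Ps on E: removing from E \ Bs a maximal P-null set leaves a set on which mu is
   dominated by P, hence by a mixture of P and Ps, so maximality makes it mu-null.
   Mixing the Ps obtained on a countable cover yields P0 in F dominating F, and
   Q = {P0} satisfies (2).  Conversely, a mixture with positive weights of an
   enumeration of Q is a probability dominating sconv Q, hence F. *)

From HB Require Import structures.
From mathcomp Require Import all_boot all_order all_algebra.
From mathcomp Require Import all_classical all_reals all_analysis.
Set Implicit Arguments. Unset Strict Implicit. Unset Printing Implicit Defensive.
Import Order.TTheory GRing.Theory Num.Theory numFieldNormedType.Exports.
Local Open Scope classical_set_scope.
Local Open Scope ring_scope.

Section mixture.
Context d (T : measurableType d) (R : realType).

Definition mixture_weight : R ^nat := geometric 2^-1 2^-1.

Lemma mixture_weight_gt0 n : 0 < mixture_weight n.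
Proof. by rewrite /mixture_weight /geometric mulr_gt0 // exprn_gt0. Qed.

Lemma cvg_mixture_weight : series mixture_weight @ \oo --> (1 : R).
Proof.
have -> : (1 : R) = 2^-1 * (1 - 2^-1)^-1.
  by rewrite [X in X - _](splitr 1) mul1r addrK divff.
by apply: cvg_geometric_series; rewrite ger0_norm // invf_lt1 // ltr1n.
Qed.

Variable Pn : nat -> probability T R.

Let weighted n := mscale (NngNum (ltW (mixture_weight_gt0 n))) (Pn n).

Definition mixture := mseries weighted 0.

Lemma mixtureE A :
  mixture A = (\sum_(0 <= k <oo) ((mixture_weight k)%:E * Pn k A))%E.
Proof. by []. Qed.

Lemma mixture_setT : mixture setT = 1%E.
Proof.
rewrite mixtureE; under eq_eseriesr do rewrite probability_setT mule1.
apply: cvg_lim => //; apply: cvg_EFin; first by near=> n; rewrite sumEFin.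
rewrite (_ : _ \o _ = series mixture_weight); first exact: cvg_mixture_weight.
by apply/funext => n /=; rewrite sumEFin.
Unshelve. all: by end_near.
Qed.

HB.instance Definition _ := Measure.copy mixture (mseries weighted 0).
HB.instance Definition _ := Measure_isProbability.Build _ _ _ mixture mixture_setT.

Lemma mixture_sconv (Q : set (probability T R)) :
  (forall n, Q (Pn n)) -> sconv Q (mixture : probability T R).
Proof.
move=> QPn; exists mixture_weight, Pn; split => //.
- by move=> k; exact/ltW/mixture_weight_gt0.
- exact: cvg_mixture_weight.
Qed.

Lemma mixture_dominates n : (Pn n : set T -> \bar R) `<< mixture.
Proof.
have weighted_ge0 A k : (0 <= (mixture_weight k)%:E * Pn k A)%E.
  by rewrite mule_ge0 // lee_fin ltW // mixture_weight_gt0.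
apply/null_content_dominatesP => A mA /=; rewrite mixtureE => sum0.
have : ((mixture_weight n)%:E * Pn n A <= 0)%E.
  rewrite -sum0 (le_trans _ (nneseries_lim_ge n.+1 _)) // big_nat_recr //=.
  by rewrite leeDr // sume_ge0.
rewrite pmule_rle0 ?lte_fin ?mixture_weight_gt0 // => PnA_le0.
by apply/eqP; rewrite -measure_le0.
Qed.

End mixture.

Section exhaustion.
Local Open Scope ereal_scope.
Context d (T : measurableType d) (R : realType).
Variables (mu : {measure set T -> \bar R}) (E : set T).
Hypotheses (mE : measurable E) (muE : mu E < +oo).

Lemma measure_sup_attained (S : set (set T)) :
  (forall B, S B -> measurable B /\ B `<=` E) -> S set0 ->
  (forall Bn : (set T)^nat, (forall n, S (Bn n)) -> S (\bigcup_n Bn n)) ->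
  exists2 B, S B & forall C, S C -> mu C <= mu B.
Proof.
move=> SE S0 SU; set s := ereal_sup (mu @` S).
have s_ub C : S C -> mu C <= s by move=> SC; apply: ereal_sup_ubound; exists C.
have s_fin : s \is a fin_num.
  rewrite ge0_fin_numE; last by rewrite -(measure0 mu); exact: s_ub.
  apply: le_lt_trans muE; apply: ge_ereal_sup => _ [C /SE[mC CE] <-].
  by rewrite le_measure ?inE.
have /choice[Cn Cn_adherent] n : exists C, S C /\ s - n.+1%:R^-1%:E < mu C.
  have n_gt0 : (0 < n.+1%:R^-1 :> R)%R by rewrite invr_gt0.
  by have [_ [C SC <-] sC] := ub_ereal_sup_adherent n_gt0 s_fin; exists C.
have mCn n : measurable (Cn n) by have [/SE[]] := Cn_adherent n.
exists (\bigcup_n Cn n); first by apply: SU => n; have [] := Cn_adherent n.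
move=> C SC; apply: (le_trans (s_ub C SC)); apply/lee_addgt0Pr => e e0.
have [k /[!add0r] ke] := ltr_add_invr e0.
have [_] := Cn_adherent k; rewrite lteBlDr // => Cn_k.
apply: (le_trans (ltW Cn_k)); apply: leeD; last by rewrite lee_fin ltW.
by rewrite le_measure ?inE //; [exact: bigcup_measurable | exact: bigcup_sup].
Qed.

End exhaustion.

Lemma measureU_le_eq0 d (T : measurableType d) (R : realType)
    (mu : {measure set T -> \bar R}) A B :
  measurable A -> measurable B -> A `&` B = set0 -> mu A \is a fin_num ->
  (mu (A `|` B) <= mu A)%E -> mu B = 0%E.
Proof.
move=> mA mB AB0 muA; rewrite measureU // -[leRHS]adde0 leeD2lE // => muB_le0.
by apply/eqP; rewrite -measure_le0.
Qed.

Section dominated_on.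
Context d (T : measurableType d) (R : realType).
Implicit Types (nu P Q : {measure set T -> \bar R}) (B : set T).

Definition dominated_on (nu P : set T -> \bar R) B :=
  forall C, measurable C -> C `<=` B -> P C = 0%E -> nu C = 0%E.

Lemma dominated_on_trans nu P Q B :
  P `<< Q -> dominated_on nu P B -> dominated_on nu Q B.
Proof.
by move=> /null_content_dominatesP PQ nuP C mC CB /PQ-/(_ mC); exact: nuP.
Qed.

Lemma dominated_onU nu P B1 B2 : measurable B1 -> measurable B2 ->
  dominated_on nu P B1 -> dominated_on nu P B2 -> dominated_on nu P (B1 `|` B2).
Proof.
move=> mB1 mB2 nuP1 nuP2 C mC CB PC0.
have nuCB B' : measurable B' -> dominated_on nu P B' -> nu (C `&` B') = 0%E.
  move=> mB' nuP'; apply: nuP'; [exact: measurableI | exact: subIsetr |].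
  exact: subset_measure0 (measurableI _ _ mC _) mC (@subIsetl _ _ _) PC0.
rewrite -(setIidl CB) setIUr.
by apply: null_set_setU; [exact: measurableI | exact: measurableI | exact: nuCB..].
Qed.

Lemma dominated_on_bigcup nu P (Bn : (set T)^nat) :
  (forall n, measurable (Bn n)) -> (forall n, dominated_on nu P (Bn n)) ->
  dominated_on nu P (\bigcup_n Bn n).
Proof.
move=> mBn nuPn C mC CB PC0.
have nuCB n : nu.-negligible (C `&` Bn n).
  apply/negligibleP; first exact: measurableI.
  apply: (nuPn n); [exact: measurableI | exact: subIsetr |].
  exact: subset_measure0 (measurableI _ _ mC _) mC (@subIsetl _ _ _) PC0.
apply/negligibleP => //; rewrite -(setIidl CB) setI_bigcupr.
exact: negligible_bigcup.
Qed.

Lemma maximal_null_subset nu P A : measurable A -> (nu A < +oo)%E ->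
  exists N, [/\ measurable N, N `<=` A, P N = 0%E & dominated_on nu P (A `\` N)].
Proof.
move=> mA nuA; pose S := [set N | [/\ measurable N, N `<=` A & P N = 0%E]].
have S0 : S set0 by split; [exact: measurable0 | exact: sub0set | exact: measure0].
have SU (Nn : (set T)^nat) : (forall n, S (Nn n)) -> S (\bigcup_n Nn n).
  move=> SNn; have mNn n : measurable (Nn n) by have [] := SNn n.
  split; first exact: bigcup_measurable.
    by move=> x [n _ Nnx]; have [_ /(_ x Nnx)] := SNn n.
  apply/negligibleP; first exact: bigcup_measurable.
  by apply: negligible_bigcup => n; apply/negligibleP => //; have [] := SNn n.
have SA B : S B -> measurable B /\ B `<=` A by case.
have [N [mN NA PN0] N_max] := measure_sup_attained mA nuA SA S0 SU.
exists N; split => // C mC CAN PC0.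
have SNC : S (N `|` C).
  split; [exact: measurableU | by move=> x [/NA|/CAN[]] |].
  exact: null_set_setU.
apply: (measureU_le_eq0 mN mC _ _ (N_max _ SNC)).
  by apply/disjoints_subset => x Nx /CAN[].
by rewrite ge0_fin_numE // (le_lt_trans _ nuA) // le_measure ?inE.
Qed.

End dominated_on.

Section sconv.
Context d (T : measurableType d) (R : realType).

Lemma sconv_dominated (Q : set (probability T R))
    (mu : {measure set T -> \bar R}) :
  fam_dominated_by Q mu -> fam_dominated_by (sconv Q) mu.
Proof.
move=> Qmu P [lam [Pk [_ _ QPk PE]]]; apply/null_content_dominatesP => A mA muA0.
rewrite PE // eseries0 // => k _ _.
by have /null_content_dominatesP -> := Qmu _ (QPk k); rewrite ?mule0.
Qed.

End sconv.

Section halmos_savage.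
Context d (T : measurableType d) (R : realType).
Variables (F : set (probability T R)) (mu : {measure set T -> \bar R}).
Hypotheses (F_sconv : sigma_convex F) (F_dom : fam_dominated_by F mu).

Lemma sigma_convex_dominates_seq (Pn : nat -> probability T R) :
  (forall n, F (Pn n)) ->
  exists2 P : probability T R, F P & forall n, (Pn n : set T -> \bar R) `<< P.
Proof.
move=> FPn; exists (mixture Pn : probability T R); last exact: mixture_dominates.
exact/F_sconv/mixture_sconv.
Qed.

Lemma dominated_on_maximal E Bs (Ps : probability T R) :
  measurable E -> (mu E < +oo)%E -> measurable Bs -> Bs `<=` E -> F Ps ->
  dominated_on mu Ps Bs ->
  (forall B (Q : probability T R), measurable B -> B `<=` E -> F Q ->
     dominated_on mu Q B -> (mu B <= mu Bs)%E) ->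
  forall P, F P -> dominated_on P Ps E.
Proof.
move=> mE muE mBs BsE FPs muPs Bs_max P FP A mA AE PsA0.
have mABs : measurable (A `\` Bs) by exact: measurableD.
have [N [mN NABs PN0 muP]] := @maximal_null_subset _ _ _ mu P _ mABs
  (le_lt_trans (le_measure _ (mem_set mABs) (mem_set mE) (fun x => AE x \o fst)) muE).
pose D := (A `\` Bs) `\` N.
have mD : measurable D by exact: measurableD.
have /sigma_convex_dominates_seq[Q FQ PQ] : forall n, F (if n is 0 then P else Ps).
  by case.
have muD0 : mu D = 0%E.
  apply: (measureU_le_eq0 mBs mD); first by apply/disjoints_subset => x Bsx [[]].
    by rewrite ge0_fin_numE // (le_lt_trans _ muE) // le_measure ?inE.
  apply: (Bs_max _ Q) => //; first exact: measurableU.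
    by move=> x [/BsE | [[/AE]]].
  apply: dominated_onU => //.
    exact: dominated_on_trans (PQ 1%N) muPs.
  exact: dominated_on_trans (PQ 0%N) muP.
have mABs' := measurableI _ _ mA mBs.
have muABs0 : mu (A `&` Bs) = 0%E.
  apply: muPs => //.
  exact: subset_measure0 mABs' mA (@subIsetl _ _ _) PsA0.
have /null_content_dominatesP Pmu := F_dom FP.
apply: (subset_measure0 mA (measurableU _ _ mABs' (measurableU _ _ mN mD))).
  move=> x Ax; have [Bsx|nBsx] := pselect (Bs x); first by left.
  by have [Nx|nNx] := pselect (N x); right; [left | right; split].
apply: null_set_setU => //; first exact: measurableU.
  exact: Pmu _ mABs' muABs0.
by apply: null_set_setU => //; exact: Pmu _ mD muD0.
Qed.

Lemma halmos_savage_on E (P1 : probability T R) :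
  measurable E -> (mu E < +oo)%E -> F P1 ->
  exists2 PE : probability T R, F PE & forall P, F P -> dominated_on P PE E.
Proof.
move=> mE muE FP1.
pose S := [set B | [/\ measurable B, B `<=` E &
  exists2 P, F P & dominated_on mu P B]].
have S0 : S set0.
  split; [exact: measurable0 | exact: sub0set |].
  by exists P1 => // C _; rewrite subset0 => -> _; rewrite measure0.
have SU (Bn : (set T)^nat) : (forall n, S (Bn n)) -> S (\bigcup_n Bn n).
  move=> SBn; have mBn n : measurable (Bn n) by have [] := SBn n.
  have /choice[Pn PnBn] n : exists P, F P /\ dominated_on mu P (Bn n).
    by have [_ _ [P FP muP]] := SBn n; exists P.
  have [P FP PnP] := sigma_convex_dominates_seq (fun n => (PnBn n).1).
  split; first exact: bigcup_measurable.
    by move=> x [n _ Bnx]; have [_ /(_ x Bnx)] := SBn n.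
  exists P => //; apply: dominated_on_bigcup => // n.
  exact: dominated_on_trans (PnP n) (PnBn n).2.
have SE B : S B -> measurable B /\ B `<=` E by case.
have [Bs [mBs BsE [Ps FPs muPs]] Bs_max] := measure_sup_attained mE muE SE S0 SU.
exists Ps => //; apply: dominated_on_maximal mBs BsE FPs muPs _ => //.
by move=> B Q mB BE FQ muQ; apply: Bs_max; split => //; exists Q.
Qed.

Lemma halmos_savage (P1 : probability T R) : sigma_finite setT mu -> F P1 ->
  exists2 P0 : probability T R, F P0 & forall P, F P -> (P : set T -> \bar R) `<< P0.
Proof.
move=> [En covE finEn] FP1; have mEn n : measurable (En n) by have [] := finEn n.
have /choice[PE PEn] n : exists PE, F PE /\ forall P, F P -> dominated_on P PE (En n).
  have [_ muEn] := finEn n.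
  by have [PE FPE domPE] := halmos_savage_on (mEn n) muEn FP1; exists PE.
have [P0 FP0 PEP0] := sigma_convex_dominates_seq (fun n => (PEn n).1).
exists P0 => // P FP; apply/null_content_dominatesP => A mA P0A0.
have PAEn n : P.-negligible (A `&` En n).
  apply/negligibleP; first exact: measurableI.
  have /null_content_dominatesP PEnA0 := PEP0 n.
  apply: (PEn n).2 FP _ (measurableI _ _ mA (mEn n)) (@subIsetr _ _ _) _.
  exact: subset_measure0 (measurableI _ _ mA (mEn n)) mA (@subIsetl _ _ _)
    (PEnA0 _ mA P0A0).
apply/negligibleP => //; rewrite -(setIidl (subsetT A)) covE setI_bigcupr.
exact: negligible_bigcup.
Qed.

End halmos_savage.

Unset Implicit Arguments.

Theorem lemma3p2 (d : measure_display) (T : measurableType d) (R : realType)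
  (F : set (probability T R)) :
  sigma_convex F ->
  ((exists mu : {measure set T -> \bar R},
      sigma_finite setT mu /\ fam_dominated_by F mu)
   <->
   (exists Q : set (probability T R),
      [/\ countable Q,
          (forall P1 P2, Q P1 -> Q P2 ->
             (P1 : set T -> \bar R) <> P2 -> msingular P1 P2),
          lll Q F &
          lll F (sconv Q)])).
Proof.
move=> F_sconv; split.
- move=> [mu [mu_sfin F_dom]].
  have [[P1 FP1]|F0] := pselect (exists P, F P); last first.
    by exists set0; split => // P FP; exfalso; apply: F0; exists P.
  have [P0 FP0 P0_dom] := halmos_savage F_sconv F_dom mu_sfin FP1.
  exists [set P0]; split; first exact: countable1.
  + by move=> P1' P2' -> -> [].
  + by move=> _ ->; exists P0 => // A.
  + move=> P FP; exists (mixture (fun=> P0) : probability T R).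
      by apply: mixture_sconv.
    apply: null_dominates_trans (P0_dom P FP) _.
    exact: (@mixture_dominates _ _ _ (fun=> P0) 0%N).
- move=> [Q [/pcard_surjP[g Qg] _ _ FQ]].
  exists (mixture g); split; first exact: sigma_finiteT.
  have Q_dom : fam_dominated_by (sconv Q) (mixture g).
    apply: sconv_dominated => _ /Qg[n _ <-]; exact: mixture_dominates.
  move=> P /FQ[P' /Q_dom P'_dom PP'].
  exact: null_dominates_trans PP' P'_dom.
Qed.
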